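(* Let $f\in\mathcal{C}$ and let $f^\ast(t):=t f(1/t)$ for $t>0$, extended by $f^\ast(0):=\lim_{t\downarrow0}f^\ast(t)\in(-\infty,\infty]$. Then for all probability measures $P,Q$ on a common measurable space and all $\gamma\in[1,\infty)$, $$D_f(P\|Q)\ \ge\ f^\ast\!\Bigl(1+\tfrac1\gamma E_\gamma(P\|Q)\Bigr) + f^\ast\!\Bigl(\tfrac1\gamma\bigl(1-E_\gamma(P\|Q)\bigr)\Bigr) - f^\ast\!\Bigl(\tfrac1\gamma\Bigr).$$
   Context: $\mathcal{C}$ is the set of convex $f\colon(0,\infty)\to\mathbb{R}$ with $f(1)=0$. For densities $p,q$ of $P,Q$ w.r.t. a dominating measure $\mu$, $D_f(P\|Q):=\int qf(p/q)\,\mathrm{d}\mu$ with conventions $f(0):=\lim_{t\downarrow0}f(t)$, $0f(0/0)=0$, $0f(a/0)=a\lim_{u\to\infty}f(u)/u$ for $a>0$. For $\gamma\ge1$, $E_\gamma(P\|Q):=\sup_U(P(U)-\gamma Q(U))=\int(p-\gamma q)^+\,\mathrm{d}\mu$. *)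

From HB Require Import structures.
From mathcomp Require Import all_boot all_order all_algebra.
From mathcomp Require Import all_classical all_reals all_analysis.
Set Implicit Arguments. Unset Strict Implicit. Unset Printing Implicit Defensive.
Import Order.TTheory GRing.Theory Num.Theory.
Import numFieldNormedType.Exports.
Local Open Scope classical_set_scope.
Local Open Scope ring_scope.

Definition convex_pos (R : realType) (f : R -> R) : Prop :=
  forall x y t : R, 0 < x -> 0 < y -> 0 <= t <= 1 ->
    f (t * x + (1 - t) * y) <= t * f x + (1 - t) * f y.

Definition classC (R : realType) (f : R -> R) : Prop :=
  convex_pos f /\ f 1 = 0.

Definition f_at0 (R : realType) (f : R -> R) : \bar R :=
  lim ((fun t => (f t)%:E) @ 0^'+).

Definition f_slope_inf (R : realType) (f : R -> R) : \bar R :=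
  lim ((fun u => (f u / u)%:E) @ +oo).

Definition fstar (R : realType) (f : R -> R) (t : R) : \bar R :=
  if 0 < t then (t * f t^-1)%:E
  else lim ((fun s => (s * f s^-1)%:E) @ 0^'+).

Definition fdiv_integrand (R : realType) (f : R -> R) (p q : R) : \bar R :=
  if 0 < q then
    (if 0 < p then (q * f (p / q))%:E else (q%:E * f_at0 f)%E)
  else
    (if 0 < p then (p%:E * f_slope_inf f)%E else 0%E).

(* D_f(P||Q) := \int q f(p/q) dmu for densities p, q w.r.t. mu *)
Definition fdiv (R : realType) (d : measure_display) (T : measurableType d)
  (mu : {measure set T -> \bar R}) (f : R -> R) (p q : T -> R) : \bar R :=
  (\int[mu]_x fdiv_integrand f (p x) (q x))%E.

Definition Egamma (R : realType) (d : measure_display) (T : measurableType d)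
  (P Q : {measure set T -> \bar R}) (gamma : R) : \bar R :=
  ereal_sup [set (P U - gamma%:E * Q U)%E | U in measurable].

From HB Require Import structures.
From mathcomp Require Import all_boot all_order all_algebra.
From mathcomp Require Import all_classical all_reals all_analysis.
From mathcomp Require Import ring lra measurable_realfun.
Import Order.TTheory GRing.Theory Num.Theory.
Import numFieldNormedType.Exports.
Local Open Scope classical_set_scope.
Local Open Scope ring_scope.
Set Implicit Arguments. Unset Strict Implicit.

(* An affine minorant t |-> a t + b of f on (0, oo) gives q f(p/q) >= a p + b q pointwise,
   boundary conventions included, and f^*(w) >= a + b w, with equality at w = u when the
   minorant is the tangent line of f at 1/u.  Integrating the tangent line at 1/v on
   A = {gamma q < p} and the tangent line at 1/u off A, where u = 1 + E/gamma and
   v = (1 - E)/gamma, bounds D_f(P||Q) below by an affine expression in P(A) and Q(A).  It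
   dominates f^*(u) + f^*(v) - f^*(1/gamma) because E <= P(A) - gamma Q(A) and the intercept
   of a tangent line decreases with its point of contact.  When E = 1 the point v is 0, and
   f^*(0), the slope of f at infinity, is bounded by the slope of every affine minorant. *)

Definition secant (R : realType) (f : R -> R) (x y : R) : R := (f y - f x) / (y - x).

Definition lslope (R : realType) (f : R -> R) (x : R) : R :=
  sup [set secant f y x | y in [set y | 0 < y < x]].

Definition tangent_intercept (R : realType) (f : R -> R) (x : R) : R :=
  f x - lslope f x * x.

Definition affine_minorant (R : realType) (f : R -> R) (a b : R) : Prop :=
  forall t, 0 < t -> a * t + b <= f t.

Section convex_pos_theory.
Variables (R : realType) (f : R -> R).
Hypothesis cf : convex_pos f.

Lemma convex_pos_chord a b c : 0 < a -> a < b -> b < c ->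
  f b * (c - a) <= f a * (c - b) + f c * (b - a).
Proof.
move=> a0 ab bc; have ca : 0 < c - a by lra.
pose t := (c - b) / (c - a).
have t01 : 0 <= t <= 1.
  by apply/andP; split; rewrite /t ?divr_ge0 ?ler_pdivrMr //; lra.
have := cf a0 (lt_trans a0 (lt_trans ab bc)) t01.
have -> : t * a + (1 - t) * c = b by rewrite /t; field; lra.
rewrite -(ler_pM2r ca).
suff -> : (t * f a + (1 - t) * f c) * (c - a) = f a * (c - b) + f c * (b - a) by [].
by rewrite /t; field; lra.
Qed.

Lemma secant_le_secant_mid y x z : 0 < y -> y < x -> x < z ->
  secant f y x <= secant f x z.
Proof.
move=> y0 yx xz; have := convex_pos_chord y0 yx xz.
have xy0 : 0 < x - y by lra.
have zx0 : 0 < z - x by lra.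
rewrite /secant ler_pdivrMr // mulrAC ler_pdivlMr //; nra.
Qed.

Lemma secant_le_secant_right a b c : 0 < a -> a < b -> b < c ->
  secant f a c <= secant f b c.
Proof.
move=> a0 ab bc; have := convex_pos_chord a0 ab bc.
have ca : 0 < c - a by lra.
have cb : 0 < c - b by lra.
rewrite /secant ler_pdivrMr // mulrAC ler_pdivlMr //; nra.
Qed.

Lemma secant_mono a b c d : 0 < a -> a < b -> b <= c -> c < d ->
  secant f a b <= secant f c d.
Proof.
move=> a0 ab bc cd.
apply: le_trans (secant_le_secant_mid a0 ab (le_lt_trans bc cd)) _.
case: (ltgtP b c) bc => // [bc' _|<- _]; last exact: lexx.
by apply: secant_le_secant_right => //; lra.
Qed.

Lemma lslope_support x z : 0 < x -> 0 < z -> f x + lslope f x * (z - x) <= f z.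
Proof.
move=> x0 z0.
set S := [set secant f y x | y in [set y | 0 < y < x]].
have ub w : x < w -> ubound S (secant f x w).
  by move=> xw _ [y /= /andP[y0 yx] <-]; exact: secant_le_secant_mid.
have hS : has_sup S.
  split; last by exists (secant f x (x + 1)); apply: ub; lra.
  by exists (secant f (x / 2) x), (x / 2) => //=; apply/andP; split; lra.
have [zx|xz|<-] := ltgtP z x; last by rewrite subrr mulr0 addr0.
- have : secant f z x <= lslope f x.
    by apply: sup_upper_bound => //; exists z => //=; apply/andP; split.
  have xz0 : 0 < x - z by lra.
  rewrite /secant ler_pdivrMr // => h; nra.
- have : lslope f x <= secant f x z by apply: ge_sup; [exact: hS.1 | exact: ub].
  have zx0 : 0 < z - x by lra.
  rewrite /secant ler_pdivlMr // => h; nra.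
Qed.

Lemma tangent_minorant x : 0 < x ->
  affine_minorant f (lslope f x) (tangent_intercept f x).
Proof.
move=> x0 t t0; have := lslope_support x0 t0.
by rewrite /tangent_intercept; lra.
Qed.

Lemma tangent_intercept_le x y : 0 < x -> x <= y ->
  tangent_intercept f y <= tangent_intercept f x.
Proof.
move=> x0; case: (ltgtP x y) => // [xy _|<- _]; last exact: lexx.
have y0 := lt_trans x0 xy.
have := tangent_minorant y0 x0; have := tangent_minorant x0 y0.
rewrite /tangent_intercept; nra.
Qed.

Lemma convex_pos_cvg_at0 : cvg ((fun t => (f t)%:E) @ 0^'+).
Proof.
have [[e e0 He]|N] := pselect (exists2 e, 0 < e &
    forall s t, 0 < s -> s < t -> t < e -> f t <= f s).
- apply: nonincreasing_at_right_is_cvge.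
  near=> x => s t; rewrite !in_itv /= => /andP[s0 sx] /andP[t0 tx] st.
  rewrite lee_fin; case: (ltgtP s t) st => // [st' _|-> _]; last exact: lexx.
  apply: He => //; apply: (lt_le_trans tx); near: x; exact: nbhs_right_le.
- apply: nondecreasing_at_right_is_cvge.
  near=> x => s t; rewrite !in_itv /= => /andP[s0 sx] /andP[t0 tx] st.
  rewrite lee_fin leNgt; apply/negP => fts.
  case: (ltgtP s t) st => // [st' _|ts _]; last by move: fts; rewrite ts ltxx.
  have neg_secant : secant f s t < 0 by rewrite /secant pmulr_llt0 ?invr_gt0; lra.
  apply: N; exists s => // s' t' s'0 s't' t's.
  have := le_lt_trans (secant_mono s'0 s't' (ltW t's) st') neg_secant.
  by rewrite /secant pmulr_llt0 ?invr_gt0; lra.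
Unshelve. all: by end_near. Qed.

Lemma convex_pos_perspective : convex_pos (fun s => s * f s^-1).
Proof.
move=> x y t x0 y0 /andP[t0 t1].
set s := t * x + (1 - t) * y.
have s0 : 0 < s.
  rewrite /s; have [->|tp] := eqVneq t 0; first by rewrite mul0r add0r subr0 mul1r.
  have tp' : 0 < t by rewrite lt_def tp t0.
  apply: (lt_le_trans (mulr_gt0 tp' x0)); rewrite lerDl mulr_ge0 //; lra.
pose l := t * x / s.
have l01 : 0 <= l <= 1.
  apply/andP; split; first by rewrite /l divr_ge0 // ?mulr_ge0 // ltW.
  rewrite /l ler_pdivrMr // mul1r /s lerDl mulr_ge0 //; lra.
have := cf (x:=x^-1) (y:=y^-1); rewrite !invr_gt0 => /(_ l x0 y0 l01).
have -> : l * x^-1 + (1 - l) * y^-1 = s^-1.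
  by rewrite /l /s; field; rewrite -/s (gt_eqF s0) (gt_eqF y0) (gt_eqF x0).
rewrite -(ler_pM2l s0).
suff -> : s * (l * f x^-1 + (1 - l) * f y^-1) =
  t * (x * f x^-1) + (1 - t) * (y * f y^-1) by [].
by rewrite /l /s; field; rewrite -/s (gt_eqF s0).
Qed.

End convex_pos_theory.

Lemma inv_cvg_pinfty_at0 (R : realType) : (fun u : R => u^-1) @ +oo --> (0 : R)^'+.
Proof.
move=> A /= [e /= e0 eA]; exists e^-1; split; first by rewrite num_real.
move=> x ex /=; have x0 : 0 < x by apply: lt_trans ex; rewrite invr_gt0.
apply: eA; last by rewrite invr_gt0.
rewrite /= sub0r normrN gtr0_norm ?invr_gt0 //.
by rewrite -(invrK e) ltf_pV2 ?posrE ?invr_gt0.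
Qed.

Section fstar_theory.
Variables (R : realType) (f : R -> R).
Hypothesis cf : convex_pos f.

Lemma f_slope_inf_cvg : cvg ((fun u => (f u / u)%:E) @ +oo).
Proof.
have /cvg_ex [l hl] := convex_pos_cvg_at0 (convex_pos_perspective cf).
apply/cvg_ex; exists l; move: (cvg_comp _ _ (@inv_cvg_pinfty_at0 R) hl).
suff -> : (fun u => (f u / u)%:E) = (fun s => (s * f s^-1)%:E) \o (fun u => u^-1) by [].
by apply: funext => u /=; rewrite invrK mulrC.
Qed.

Lemma f_slope_inf_ge a b : affine_minorant f a b -> (a%:E <= f_slope_inf f)%E.
Proof.
move=> hf; apply/lee_subgt0Pr => e e0; apply: lime_ge; first exact: f_slope_inf_cvg.
near=> u.
have u0 : 0 < u by near: u; apply: nbhs_pinfty_gt; rewrite num_real.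
have ub : `|b| / e < u by near: u; apply: nbhs_pinfty_gt; rewrite num_real.
rewrite -EFinB lee_fin ler_pdivlMr //.
move: ub (hf u u0) (ler_norm (- b)); rewrite ltr_pdivrMr // normrN; nra.
Unshelve. all: by end_near. Qed.

Lemma f_at0_ge a b : affine_minorant f a b -> (b%:E <= f_at0 f)%E.
Proof.
move=> hf; apply/lee_subgt0Pr => e e0; apply: lime_ge; first exact: convex_pos_cvg_at0.
have ea : 0 < e / (`|a| + 1) by rewrite divr_gt0 // ltr_wpDl.
near=> t.
have t0 : 0 < t by near: t; apply: nbhs_right_gt.
have te : t < e / (`|a| + 1) by near: t; apply: nbhs_right_lt.
rewrite -EFinB lee_fin.
move: te (hf t t0) (ler_norm (- a)); rewrite ltr_pdivlMr ?ltr_wpDl // normrN; nra.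
Unshelve. all: by end_near. Qed.

Lemma fdiv_integrand_ge a b p q : affine_minorant f a b -> 0 <= p -> 0 <= q ->
  ((a * p + b * q)%:E <= fdiv_integrand f p q)%E.
Proof.
move=> hf p0 q0; rewrite /fdiv_integrand.
case: (ltgtP 0 q) q0 => // [qp _|<- _]; case: (ltgtP 0 p) p0 => // [pp _|<- _].
- rewrite lee_fin; have := hf (p / q) (divr_gt0 pp qp); rewrite -(ler_pM2l qp).
  suff -> : q * (a * (p / q) + b) = a * p + b * q by [].
  by field; rewrite gt_eqF.
- rewrite mulr0 add0r mulrC EFinM; apply: lee_wpmul2l; first by rewrite lee_fin ltW.
  exact: f_at0_ge hf.
- rewrite mulr0 addr0 mulrC EFinM; apply: lee_wpmul2l; first by rewrite lee_fin ltW.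
  exact: f_slope_inf_ge hf.
- by rewrite !mulr0 addr0.
Qed.

Lemma fstar_pos t : 0 < t -> fstar f t = (t * f t^-1)%:E.
Proof. by move=> t0; rewrite /fstar t0. Qed.

Lemma fstar_ge_minorant a b w : affine_minorant f a b -> 0 < w ->
  ((a + b * w)%:E <= fstar f w)%E.
Proof.
move=> hf w0; rewrite fstar_pos // lee_fin.
have /(ler_wpM2l (ltW w0)) : a * w^-1 + b <= f w^-1 by apply: hf; rewrite invr_gt0.
suff -> : w * (a * w^-1 + b) = a + b * w by [].
by field; rewrite gt_eqF.
Qed.

Lemma fstar_tangent u : 0 < u ->
  fstar f u = (lslope f u^-1 + tangent_intercept f u^-1 * u)%:E.
Proof.
by move=> u0; rewrite fstar_pos // /tangent_intercept; congr EFin; field; rewrite gt_eqF.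
Qed.

Lemma fstar0_le M : (forall a b, affine_minorant f a b -> a <= M) ->
  (fstar f 0 <= M%:E)%E.
Proof.
move=> hM.
have near0 s : 0 < s -> s < 1 -> s * f s^-1 <= s * f 1 + M * (1 - s).
  move=> s0 s1; have si0 : 0 < s^-1 by rewrite invr_gt0.
  have at1 := tangent_minorant cf si0 ltr01.
  have aM := hM _ _ (tangent_minorant cf si0).
  move: at1 aM; rewrite /tangent_intercept; set a := lslope f s^-1 => at1 aM.
  have -> : s * f s^-1 = a + s * (f s^-1 - a * s^-1) by field; rewrite gt_eqF.
  have : 0 <= (M - a) * (1 - s) by apply: mulr_ge0; lra.
  nra.
rewrite /fstar ltxx; apply/lee_addgt0Pr => e e0.
apply: lime_le; first exact: convex_pos_cvg_at0 (convex_pos_perspective cf).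
have ea : 0 < e / (`|M| + `|f 1| + 1) by rewrite divr_gt0 // ltr_wpDl.
near=> s.
have s0 : 0 < s by near: s; apply: nbhs_right_gt.
have s1 : s < 1 by near: s; apply: nbhs_right_lt.
have se : s < e / (`|M| + `|f 1| + 1) by near: s; apply: nbhs_right_lt.
rewrite -EFinD lee_fin.
move: se (near0 s s0 s1) (ler_norm (- M)) (ler_norm (f 1)).
rewrite ltr_pdivlMr ?ltr_wpDl ?addr_ge0 // normrN => se h hM' hf1.
have : 0 <= s * (`|M| + M) by apply: mulr_ge0; lra.
have : 0 <= s * (`|f 1| - f 1) by apply: mulr_ge0; lra.
nra.
Unshelve. all: by end_near. Qed.

Section gap_bound.
Variables (gamma E PA QA : R) (D : \bar R).
Hypotheses (g1 : 1 <= gamma) (E0 : 0 <= E) (E_le : E <= PA - gamma * QA)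
  (QA0 : 0 <= QA) (PA1 : PA <= 1).
Hypothesis two_minorants : forall a1 b1 a2 b2,
  affine_minorant f a1 b1 -> affine_minorant f a2 b2 ->
  ((a2 * PA + b2 * QA + (a1 * (1 - PA) + b1 * (1 - QA)))%:E <= D)%E.

Let g0 : 0 < gamma. Proof. exact: lt_le_trans ltr01 g1. Qed.
Let invg_gt0 : 0 < gamma^-1. Proof. by rewrite invr_gt0. Qed.
Let u_gt0 : 0 < 1 + E / gamma. Proof. by rewrite ltr_wpDr // mulr_ge0 // ltW. Qed.

Lemma fstar_gap_le_lt1 : E < 1 ->
  (fstar f (1 + E / gamma) + fstar f ((1 - E) / gamma) - fstar f gamma^-1 <= D)%E.
Proof.
move=> E1; have v0 : 0 < (1 - E) / gamma by rewrite divr_gt0 // subr_gt0.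
have w0 := invg_gt0; have u0 := u_gt0.
set w := gamma^-1 in w0 u0 v0 *; set u := 1 + E * w in u0 *; set v := (1 - E) * w in v0 *.
have t10 : 0 < u^-1 by rewrite invr_gt0.
have ht1 := tangent_minorant cf t10.
have ht2 : affine_minorant f (lslope f v^-1) (tangent_intercept f v^-1).
  by apply: (tangent_minorant cf); rewrite invr_gt0.
have b21 : tangent_intercept f v^-1 <= tangent_intercept f u^-1.
  apply: tangent_intercept_le => //; rewrite lef_pV2 ?posrE //.
  have w1 : w <= 1 by rewrite invf_le1.
  have : 0 <= E * w by rewrite mulr_ge0 // ltW.
  by rewrite /u /v mulrBl mul1r; lra.
have := fstar_ge_minorant ht1 w0; have := fstar_ge_minorant ht2 w0.
rewrite (fstar_pos w0) !lee_fin (fstar_tangent u0) (fstar_tangent v0) => fw2 fw1.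
apply: (le_trans _ (two_minorants ht1 ht2)); rewrite -EFinD lee_fin.
move: fw1 fw2 b21; set a1 := lslope f _; set b1 := tangent_intercept f _.
set a2 := lslope f _; set b2 := tangent_intercept f _; set fw := w * _ => fw1 fw2 b21.
have wQ : 0 <= w * (PA - E) - QA.
  have -> : QA = w * (gamma * QA) by rewrite mulrA mulVf ?gt_eqF // mul1r.
  by rewrite -mulrBr; apply: mulr_ge0; [exact: ltW | move: E_le; lra].
have PA0 : 0 <= PA.
  by move: E0 E_le (mulr_ge0 (ltW g0) QA0); lra.
have H1 : 0 <= (b1 - b2) * (w * (PA - E) - QA) by rewrite mulr_ge0 // subr_ge0.
have H2 : 0 <= PA * (fw - a1 - b1 * w) by apply: mulr_ge0 => //; lra.
have H3 : 0 <= (1 - PA) * (fw - a2 - b2 * w) by apply: mulr_ge0; move: PA1; lra.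
rewrite /u /v; nra.
Qed.

Lemma fstar_gap_le_eq1 : E = 1 ->
  (fstar f (1 + E / gamma) + fstar f ((1 - E) / gamma) - fstar f gamma^-1 <= D)%E.
Proof.
move=> E1; have gQ0 := mulr_ge0 (ltW g0) QA0.
have PA1' : PA = 1 by move: E_le PA1; lra.
have QA0' : QA = 0.
  by apply/eqP; rewrite eq_le QA0 andbT -(pmulr_rle0 _ g0); move: E_le; lra.
have w0 := invg_gt0; have u0 := u_gt0.
rewrite E1 subrr mul0r mul1r; set w := gamma^-1 in w0 u0 *; rewrite E1 mul1r in u0.
have t10 : 0 < (1 + w)^-1 by rewrite invr_gt0.
have ht1 := tangent_minorant cf t10; have := fstar_ge_minorant ht1 w0.
rewrite (fstar_pos w0) lee_fin (fstar_tangent u0).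
set a1 := lslope f _; set b1 := tangent_intercept f _ => fw1; case hD : D => [Dr| |]; last 2 first.
- by rewrite leey.
- by move: (two_minorants ht1 ht1); rewrite hD leeNy_eq.
have hM : (fstar f 0 <= (Dr - b1)%:E)%E.
  apply: fstar0_le => a b hab; move: (two_minorants ht1 hab).
  by rewrite hD lee_fin PA1' QA0' -/a1 -/b1; lra.
apply: le_trans (leeB (leeD (lexx _) hM) (lexx _)) _.
by rewrite -EFinD lee_fin; nra.
Qed.

Lemma fstar_gap_le :
  (fstar f (1 + E / gamma) + fstar f ((1 - E) / gamma) - fstar f gamma^-1 <= D)%E.
Proof.
have : E <= 1 by move: E_le PA1 (mulr_ge0 (ltW g0) QA0); lra.
by rewrite le_eqVlt => /orP[/eqP|]; [exact: fstar_gap_le_eq1 | exact: fstar_gap_le_lt1].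
Qed.

End gap_bound.

End fstar_theory.

(* No measurability is needed: the integral is defined through suprema of simple functions
   below the positive and negative parts of the integrand. *)
Lemma le_integral_pointwise (R : realType) (d : measure_display) (T : measurableType d)
  (mu : {measure set T -> \bar R}) (G F : T -> \bar R) :
  (forall x, (G x <= F x)%E) -> (\int[mu]_x G x <= \int[mu]_x F x)%E.
Proof.
move=> GF; rewrite /integral.
apply: leeB; apply: ereal_sup_le => _ [h /= hh <-]; exists h => //= x.
- apply: (le_trans (hh x)); rewrite !funeposE !patchE in_setT.
  by apply: le_max2 => //; exact: GF.
- apply: (le_trans (hh x)); rewrite !funenegE !patchE in_setT.
  by apply: le_max2 => //; rewrite leeN2.
Qed.

Definition is_density (R : realType) (d : measure_display) (T : measurableType d)
    (mu : {measure set T -> \bar R}) (p : T -> R) (P : set T -> \bar R) : Prop :=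
  [/\ measurable_fun setT p, forall x, 0 <= p x &
      forall A, measurable A -> P A = (\int[mu]_(x in A) (p x)%:E)%E].

Definition gamma_set (R : realType) (T : Type) (p q : T -> R) (gamma : R) : set T :=
  [set x | gamma * q x < p x].

Section densities.
Context (R : realType) (d : measure_display) (T : measurableType d).
Variable mu : {measure set T -> \bar R}.

Lemma fine_probabilityK (P : probability T R) A : measurable A -> (fine (P A))%:E = P A.
Proof. by move=> mA; rewrite fineK // fin_num_measure. Qed.

Lemma fine_probability_setC (S : probability T R) X : measurable X ->
  fine (S (~` X)) = 1 - fine (S X).
Proof.
by move=> mX; rewrite probability_setC // -(fine_probabilityK S mX) -EFinB.
Qed.

Lemma density_integrable (P : probability T R) p D :
  is_density mu p P -> measurable D -> mu.-integrable D (EFin \o p).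
Proof.
move=> [mp p0 hP] mD; apply/integrableP; split.
  by apply/measurable_EFinP; exact: measurable_funS mp.
under eq_integral => x _ do rewrite /= ger0_norm //.
by rewrite -hP // -fine_probabilityK // ltry.
Qed.

Lemma density_scale_integrable (P : probability T R) p c D :
  is_density mu p P -> measurable D -> mu.-integrable D (fun x => (c * p x)%:E).
Proof.
move=> hp mD; rewrite (_ : (fun x => _) = (fun x => c%:E * (EFin \o p) x)%E).
  exact: integrableZl (density_integrable hp mD).
by apply: funext => x; rewrite EFinM.
Qed.

Lemma integral_density_scale (P : probability T R) p c D :
  is_density mu p P -> measurable D ->
  (\int[mu]_(x in D) (c * p x)%:E = (c * fine (P D))%:E)%E.
Proof.
move=> hp mD; under eq_integral do rewrite EFinM.
rewrite integralZl ?(density_integrable hp) // EFinM fine_probabilityK //.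
by case: hp => _ _ ->.
Qed.

Lemma density_scale_le (P Q : probability T R) p q a b B :
  is_density mu p P -> is_density mu q Q -> measurable B ->
  (forall x, B x -> a * p x <= b * q x) -> a * fine (P B) <= b * fine (Q B).
Proof.
move=> hp hq mB pq; rewrite -lee_fin -(integral_density_scale a hp mB).
rewrite -(integral_density_scale b hq mB).
have := le_integral mB (density_scale_integrable a hp mB) (density_scale_integrable b hq mB).
by apply => x /[!inE] Bx; rewrite lee_fin pq.
Qed.

Lemma integral_two_densities (P Q : probability T R) p q a b D :
  is_density mu p P -> is_density mu q Q -> measurable D ->
  (\int[mu]_(x in D) (a * p x + b * q x)%:E =
    (a * fine (P D) + b * fine (Q D))%:E)%E.
Proof.
move=> hp hq mD; under eq_integral do rewrite EFinD.
rewrite integralD ?(density_scale_integrable _ hp) ?(density_scale_integrable _ hq) //.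
by rewrite (integral_density_scale _ hp) // (integral_density_scale _ hq).
Qed.

Section gamma_set.
Variables (P Q : probability T R) (p q : T -> R) (gamma : R).
Hypotheses (hp : is_density mu p P) (hq : is_density mu q Q).
Let A := gamma_set p q gamma.

Lemma measurable_gamma_set : measurable A.
Proof.
case: hp => mp _ _; case: hq => mq _ _.
have := @measurable_lte _ _ R setT measurableT (EFin \o (fun x => gamma * q x)) (EFin \o p).
rewrite setTI; apply; apply/measurable_EFinP => //.
exact: measurable_funM.
Qed.

Lemma Egamma_ge0 : (0 <= Egamma P Q gamma)%E.
Proof.
apply: le_trans (ereal_sup_ubound _); last by exists set0.
by rewrite !measure0 mule0 sube0.
Qed.

(* On U \ A we have p <= gamma q and on A \ U we have gamma q < p, so replacing U by A
   can only increase P U - gamma Q U. *)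
Lemma Egamma_le_gamma_set :
  (Egamma P Q gamma <= (fine (P A) - gamma * fine (Q A))%:E)%E.
Proof.
have mA := measurable_gamma_set.
apply: ge_ereal_sup => _ [U mU <-].
rewrite -[X in (X - _)%E](fine_probabilityK P mU).
rewrite -[X in (_ * X)%E](fine_probabilityK Q mU) -EFinM -EFinB lee_fin.
have split_fine (S : probability T R) X Y : measurable X -> measurable Y ->
    fine (S X) = fine (S (X `\` Y)) + fine (S (X `&` Y)).
  move=> mX mY; rewrite (measureDI S mX mY) fineD //; apply: fin_num_measure.
    exact: measurableD.
  exact: measurableI.
rewrite (split_fine P U A) // (split_fine Q U A) // (split_fine P A U) //.
rewrite (split_fine Q A U) // setIC.
have outside : 1 * fine (P (U `\` A)) <= gamma * fine (Q (U `\` A)).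
  apply: density_scale_le hp hq (measurableD mU mA) _ => x [_ /negP].
  by rewrite mul1r -leNgt.
have inside : gamma * fine (Q (A `\` U)) <= 1 * fine (P (A `\` U)).
  apply: density_scale_le hq hp (measurableD mA mU) _ => x [Ax _].
  by rewrite mul1r ltW.
lra.
Qed.

Variable f : R -> R.
Hypothesis cf : convex_pos f.

Lemma fdiv_ge_two_minorants a1 b1 a2 b2 :
  affine_minorant f a1 b1 -> affine_minorant f a2 b2 ->
  ((a2 * fine (P A) + b2 * fine (Q A) +
    (a1 * (1 - fine (P A)) + b1 * (1 - fine (Q A))))%:E <= fdiv mu f p q)%E.
Proof.
move=> h1 h2; have [mp p0 _] := hp; have [mq q0 _] := hq.
pose g x := if gamma * q x < p x then a2 * p x + b2 * q x else a1 * p x + b1 * q x.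
apply: (@le_trans _ _ (\int[mu]_x (g x)%:E)%E); last first.
  by apply: le_integral_pointwise => x; rewrite /g; case: ifP => _;
    apply: (fdiv_integrand_ge cf).
have mg : measurable_fun setT (fun x => (g x)%:E).
  apply/measurable_EFinP; apply: measurable_fun_ifT.
  - by apply: measurable_fun_ltr => //; exact: measurable_funM.
  - by apply: measurable_funD; exact: measurable_funM.
  - by apply: measurable_funD; exact: measurable_funM.
have mA := measurable_gamma_set; have mAC := measurableC mA.
rewrite -(setUv A) integral_setU //; last 2 first.
- by rewrite setUv.
- exact/disj_setPCl.
rewrite (@eq_integral _ _ _ mu A (fun x => (a2 * p x + b2 * q x)%:E)); last first.
  by move=> x /[!inE] Ax; rewrite /g ifT.
rewrite (@eq_integral _ _ _ mu (~` A) (fun x => (a1 * p x + b1 * q x)%:E)); last first.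
  by move=> x /[!inE] Ax; rewrite /g ifF //; apply/negP.
rewrite !(integral_two_densities _ _ hp hq) //.
by rewrite !fine_probability_setC // -EFinD.
Qed.

End gamma_set.

End densities.

Theorem theorem5 (R : realType) (f : R -> R) (d : measure_display)
  (T : measurableType d) (mu : {measure set T -> \bar R})
  (P Q : probability T R) (p q : T -> R) (gamma : R) :
  classC f ->
  measurable_fun setT p -> measurable_fun setT q ->
  (forall x, 0 <= p x) -> (forall x, 0 <= q x) ->
  (forall A, measurable A -> P A = (\int[mu]_(x in A) (p x)%:E)%E) ->
  (forall A, measurable A -> Q A = (\int[mu]_(x in A) (q x)%:E)%E) ->
  1 <= gamma ->
  let E := fine (Egamma P Q gamma) in
  (fstar f (1 + E / gamma) + fstar f ((1 - E) / gamma) - fstar f gamma^-1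
     <= fdiv mu f p q)%E.
Proof.
move=> [cf _] mp mq p0 q0 hP hQ g1; cbv zeta; set E := fine _.
have hp : is_density mu p P by split.
have hq : is_density mu q Q by split.
have E_ub := Egamma_le_gamma_set gamma hp hq.
have E_lb := Egamma_ge0 P Q gamma.
have mA := measurable_gamma_set gamma hp hq.
have EE : Egamma P Q gamma = E%:E.
  by rewrite /E fineK // ge0_fin_numE // (le_lt_trans E_ub) ?ltry.
apply: (fstar_gap_le cf g1 _ _ _ _ (fdiv_ge_two_minorants gamma hp hq cf)).
- by rewrite -lee_fin -EE.
- by rewrite -lee_fin -EE.
- exact: fine_ge0.
- by rewrite -lee_fin fine_probabilityK // probability_le1.
Qed.
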